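(* Let $H=(a_1,a_2)$ be a bounded open interval in $\mathbb R$, $\mathcal B$ a finite index set, $m\ge2$. Assume for each $\beta\in\mathcal B$: $b_\beta,\theta_\beta\in C^m(\bar H)$, $b_\beta>0$ on $\bar H$, $\theta_\beta(H)\subset H$; and that there exist $\mu\ge1$ and $\kappa<1$ with $|\theta_\omega(x)-\theta_\omega(y)|\le\kappa|x-y|$ for all $\omega\in\mathcal B_\mu$, $x,y\in\bar H$. Assume also that $\theta_\beta'(u)\ge0$, $\theta_\beta''(u)\ge0$, $b_\beta'(u)\ge0$, $b_\beta''(u)\ge0$ and $$b_\beta''(u)b_\beta(u)-(1-s)[b_\beta'(u)]^2\ge0$$ for all $\beta\in\mathcal B$, all $u\in H$, and a given real number $s$. If $s>0$ and $v_s$ is the strictly positive $C^m$ eigenvector of $(L_sf)(x)=\sum_{\beta\in\mathcal B}[b_\beta(x)]^sf(\theta_\beta(x))$ on $C^m(\bar H)$, then $Dv_s(u)\ge0$ and $D^2v_s(u)\ge0$ for all $u\in\bar H$. If in addition there is a set $F\subset\bar H$ (possibly empty) such that for all $u\in\bar H\setminus F$ and all $\beta\in\mathcal B$, $b_\beta'(u)>0$ and $b_\beta''(u)b_\beta(u)-(1-s)[b_\beta'(u)]^2>0$, then $Dv_s(u)>0$ and $D^2v_s(u)>0$ for all $u\in\bar H\setminus F$.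
   Context: $D=d/dx$. $\mathcal B_\mu=\{(j_1,\ldots,j_\mu):j_k\in\mathcal B\}$ and $\theta_{(j_1,\ldots,j_\mu)}=\theta_{j_\mu}\circ\cdots\circ\theta_{j_1}$. Under the hypotheses, $L_s$ on $C^m(\bar H)$ has a strictly positive $C^m$ eigenvector with eigenvalue $r(L_s)$, unique up to positive multiples. *)

From Stdlib Require Import Reals List.
From Coquelicot Require Import Coquelicot.
Import ListNotations.
Open Scope R_scope.

Definition Cm (m : nat) (f : R -> R) : Prop :=
  (forall k x, (k < m)%nat -> ex_derive (Derive_n f k) x) /\
  (forall x, continuous (Derive_n f m) x).

(* theta_(j_1,...,j_mu) = theta_{j_mu} o ... o theta_{j_1} *)
Definition theta_comp (theta : nat -> R -> R) (w : list nat) (x : R) : R :=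
  fold_left (fun y j => theta j y) w x.

Definition Lop (N : nat) (b theta : nat -> R -> R) (s : R) (f : R -> R) (x : R) : R :=
  fold_right (fun beta acc => Rpower (b beta x) s * f (theta beta x) + acc) 0 (seq 0 N).

(* Differentiating the eigen-equation [lam v = L_s v] once and twice gives
   [lam Dv = sum (source1 + b^s th' Dv o th)] and
   [lam D^2v = sum (source2 + b^s th'^2 D^2v o th)], where the source terms are nonnegative
   under the sign hypotheses (given [Dv >= 0] for the second).  So [w = Dv] (resp. [D^2v])
   satisfies [L_{c q} w <= lam w] with [q = th'] (resp. [th'^2]), while [L_c v = lam v].
   Minimum principle: if [c0 = min w/v] were negative, then [mu] iterations, along which the
   products of [q] are at most [kappa] (resp. [kappa^2]) by the contraction hypothesis, would give
   [w >= kappa c0 v] and hence [c0 >= kappa c0] at the minimiser, which is absurd.  Strict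
   positivity off [F] then follows because the source terms become strictly positive. *)

From Stdlib Require Import Reals List Lra Lia.
From Coquelicot Require Import Coquelicot.
Import ListNotations.
Open Scope R_scope.

Definition lsum {A} (l : list A) (g : A -> R) : R :=
  fold_right (fun a acc => g a + acc) 0 l.

Lemma lsum_app {A} (l1 l2 : list A) g : lsum (l1 ++ l2) g = lsum l1 g + lsum l2 g.
Proof. induction l1; simpl; [lra | rewrite IHl1; lra]. Qed.

Lemma lsum_map {A B} (f : A -> B) l g : lsum (map f l) g = lsum l (fun a => g (f a)).
Proof. induction l; simpl; [lra | rewrite IHl; lra]. Qed.

Lemma lsum_flat_map {A B} (F : A -> list B) l g :
  lsum (flat_map F l) g = lsum l (fun a => lsum (F a) g).
Proof. induction l; simpl; [lra | rewrite lsum_app, IHl; lra]. Qed.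

Lemma lsum_mult_l {A} (l : list A) c g : c * lsum l g = lsum l (fun a => c * g a).
Proof. induction l; simpl; [lra | rewrite <- IHl; lra]. Qed.

Lemma lsum_ext {A} (l : list A) g h : (forall a, In a l -> g a = h a) -> lsum l g = lsum l h.
Proof. induction l; simpl; intros H; [lra |]. rewrite H, IHl by auto. lra. Qed.

Lemma lsum_le {A} (l : list A) g h : (forall a, In a l -> g a <= h a) -> lsum l g <= lsum l h.
Proof.
  induction l; simpl; intros H; [lra |].
  assert (g a <= h a) by auto. assert (lsum l g <= lsum l h) by auto. lra.
Qed.

Lemma lsum_nonneg {A} (l : list A) g : (forall a, In a l -> 0 <= g a) -> 0 <= lsum l g.
Proof.
  intros H. apply Rle_trans with (lsum l (fun _ => 0)); [| apply lsum_le; exact H].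
  clear H. induction l; simpl; lra.
Qed.

Lemma lsum_pos {A} (l : list A) g : l <> [] -> (forall a, In a l -> 0 < g a) -> 0 < lsum l g.
Proof.
  destruct l as [| a l]; [congruence |]. intros _ H. simpl.
  assert (0 < g a) by (apply H; left; auto).
  assert (0 <= lsum l g) by (apply lsum_nonneg; intros; apply Rlt_le, H; right; auto).
  lra.
Qed.

Lemma is_derive_lsum {A} (l : list A) (g : A -> R -> R) (dg : A -> R) x :
  (forall a, In a l -> is_derive (g a) x (dg a)) ->
  is_derive (fun y => lsum l (fun a => g a y)) x (lsum l dg).
Proof.
  induction l; simpl; intros H.
  - exact (is_derive_const (K := R_AbsRing) 0 x).
  - apply (is_derive_plus (g a) (fun y => lsum l (fun a => g a y))); auto.
Qed.

Lemma interior_step a1 a2 x d : a1 < a2 -> a1 <= x <= a2 -> 0 < d ->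
  exists h, h <> 0 /\ Rabs h < d /\ a1 < x + h < a2.
Proof.
  intros Ha Hx Hd. set (e := Rmin d (a2 - a1) / 4).
  assert (0 < Rmin d (a2 - a1)) by (apply Rmin_pos; lra).
  pose proof (Rmin_l d (a2 - a1)). pose proof (Rmin_r d (a2 - a1)).
  destruct (Rle_dec x ((a1 + a2) / 2)).
  - exists e. rewrite Rabs_right; unfold e; lra.
  - exists (- e). rewrite Rabs_left; unfold e; lra.
Qed.

Lemma closure_ge a1 a2 f x K : a1 < a2 -> a1 <= x <= a2 -> continuity_pt f x ->
  (forall y, a1 < y < a2 -> K <= f y) -> K <= f x.
Proof.
  intros Ha Hx Hc H. destruct (Rle_dec K (f x)) as [| Hn]; auto. exfalso.
  destruct (Hc (K - f x)) as [d [Hd Hclose]]; [lra |].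
  destruct (interior_step a1 a2 x d Ha Hx Hd) as [h [Hh0 [Hhd Hh]]].
  assert (Hlt : Rabs (f (x + h) - f x) < K - f x).
  { apply (Hclose (x + h)). split.
    - split; [exact I | lra].
    - simpl. unfold R_dist. replace (x + h - x) with h by ring. auto. }
  apply Rabs_def2 in Hlt. pose proof (H _ Hh). lra.
Qed.

Lemma closure_le a1 a2 f x K : a1 < a2 -> a1 <= x <= a2 -> continuity_pt f x ->
  (forall y, a1 < y < a2 -> f y <= K) -> f x <= K.
Proof.
  intros Ha Hx Hc H.
  enough (- K <= - f x) by lra.
  apply (closure_ge a1 a2 (fun y => - f y)); auto.
  - now apply continuity_pt_opp.
  - intros y Hy. specialize (H y Hy). lra.
Qed.

Lemma derive_abs_le_of_lipschitz a1 a2 f x l K : a1 < a2 -> a1 <= x <= a2 ->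
  (forall y, a1 <= y <= a2 -> Rabs (f y - f x) <= K * Rabs (y - x)) ->
  derivable_pt_lim f x l -> Rabs l <= K.
Proof.
  intros Ha Hx Hlip Hl. destruct (Rle_dec (Rabs l) K) as [| Hn]; auto. exfalso.
  destruct (Hl (Rabs l - K)) as [d Hd]; [lra |].
  destruct (interior_step a1 a2 x d Ha Hx (cond_pos d)) as [h [Hh0 [Hhd Hh]]].
  specialize (Hd h Hh0 Hhd). set (q := (f (x + h) - f x) / h) in Hd.
  assert (Hq : Rabs q <= K).
  { assert (0 < Rabs h) by now apply Rabs_pos_lt.
    specialize (Hlip (x + h) ltac:(lra)). replace (x + h - x) with h in Hlip by ring.
    unfold q, Rdiv. rewrite Rabs_mult, Rabs_inv.
    apply (Rmult_le_reg_r (Rabs h)); auto.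
    rewrite Rmult_assoc, Rinv_l by lra. lra. }
  pose proof (Rabs_triang q (l - q)). replace (q + (l - q)) with l in H by ring.
  rewrite Rabs_minus_sym in Hd. lra.
Qed.

Lemma derive_unique_on_closure a1 a2 f g x l1 l2 : a1 < a2 -> a1 <= x <= a2 ->
  (forall y, a1 <= y <= a2 -> f y = g y) ->
  derivable_pt_lim f x l1 -> derivable_pt_lim g x l2 -> l1 = l2.
Proof.
  intros Ha Hx Heq H1 H2.
  enough (Rabs (l1 - l2) <= 0)
    by (apply Rminus_diag_uniq, Rabs_eq_0; pose proof (Rabs_pos (l1 - l2)); lra).
  apply (derive_abs_le_of_lipschitz a1 a2 (fun y => f y - g y) x); auto.
  - intros y Hy. rewrite !Heq by auto. replace (g y - g y - (g x - g x)) with 0 by ring.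
    rewrite Rabs_R0. lra.
  - now apply derivable_pt_lim_minus.
Qed.

Definition transfer (N : nat) (c th : nat -> R -> R) (f : R -> R) (x : R) : R :=
  lsum (seq 0 N) (fun beta => c beta x * f (th beta x)).

Fixpoint words (N k : nat) : list (list nat) :=
  match k with
  | 0 => [[]]
  | S k => flat_map (fun j => map (cons j) (words N k)) (seq 0 N)
  end.

(* The [k]-th iterate of [transfer N c th] maps [f] to the sum over [w] in [words N k] of
   [weight c th w * f o theta_comp th w]. *)
Fixpoint weight (c th : nat -> R -> R) (w : list nat) (x : R) : R :=
  match w with
  | [] => 1
  | j :: w' => c j x * weight c th w' (th j x)
  end.

Lemma in_words N k w : In w (words N k) ->
  length w = k /\ List.Forall (fun j => (j < N)%nat) w.
Proof.
  revert w; induction k; simpl; intros w Hw.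
  - destruct Hw as [<- | []]. auto.
  - apply in_flat_map in Hw. destruct Hw as [j [Hj Hw]].
    apply in_map_iff in Hw. destruct Hw as [w' [<- Hw']].
    apply in_seq in Hj. destruct (IHk _ Hw'). simpl. split; [lia |]. constructor; auto. lia.
Qed.

Lemma weight_mul c q th w x :
  weight (fun j y => c j y * q j y) th w x = weight c th w x * weight q th w x.
Proof. revert x; induction w; simpl; intros; [ring | rewrite IHw; ring]. Qed.

Lemma weight_pow2 c th w x :
  weight (fun j y => c j y ^ 2) th w x = weight c th w x ^ 2.
Proof. revert x; induction w; simpl; intros; [ring | rewrite IHw; ring]. Qed.

Lemma is_derive_theta_comp N th w :
  (forall beta x, (beta < N)%nat -> ex_derive (th beta) x) ->
  List.Forall (fun j => (j < N)%nat) w -> forall x,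
  is_derive (theta_comp th w) x (weight (fun j => Derive (th j)) th w x).
Proof.
  intros Hd Hw. induction Hw as [| j w Hj Hw IH]; intros x; simpl.
  - exact (is_derive_id (K := R_AbsRing) x).
  - exact (is_derive_comp (theta_comp th w) (th j) x _ _ (IH (th j x))
             (Derive_correct _ _ (Hd j x Hj))).
Qed.

Section MinimumPrinciple.

Variables (a1 a2 : R) (N : nat) (th : nat -> R -> R).
Hypothesis Ha : a1 < a2.
Hypothesis Hth : forall beta x, (beta < N)%nat -> a1 < x < a2 -> a1 < th beta x < a2.

Lemma theta_comp_interior w x : List.Forall (fun j => (j < N)%nat) w ->
  a1 < x < a2 -> a1 < theta_comp th w x < a2.
Proof.
  revert x; induction w; simpl; intros x Hw Hx; auto.
  inversion Hw; subst. apply IHw; auto.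
Qed.

Lemma weight_nonneg c w x : (forall beta x, (beta < N)%nat -> a1 < x < a2 -> 0 <= c beta x) ->
  List.Forall (fun j => (j < N)%nat) w -> a1 < x < a2 -> 0 <= weight c th w x.
Proof.
  intros Hc. revert x; induction w; simpl; intros x Hw Hx; [lra |].
  inversion Hw; subst. apply Rmult_le_pos; auto.
Qed.

Lemma transfer_iter_le c lam f : 0 <= lam ->
  (forall beta x, (beta < N)%nat -> a1 < x < a2 -> 0 <= c beta x) ->
  (forall x, a1 < x < a2 -> transfer N c th f x <= lam * f x) ->
  forall k x, a1 < x < a2 ->
  lsum (words N k) (fun w => weight c th w x * f (theta_comp th w x)) <= lam ^ k * f x.
Proof.
  intros Hlam Hc Hf k. induction k; intros x Hx; simpl; [lra |].
  rewrite lsum_flat_map.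
  apply Rle_trans with (lam ^ k * transfer N c th f x).
  - unfold transfer. rewrite lsum_mult_l. apply lsum_le. intros j Hj. apply in_seq in Hj.
    assert (0 <= c j x) by (apply Hc; auto; lia).
    assert (Hx' : a1 < th j x < a2) by (apply Hth; auto; lia).
    rewrite lsum_map. simpl.
    rewrite (lsum_ext _ _ (fun w => c j x * (weight c th w (th j x) * f (theta_comp th w (th j x)))))
      by (intros; ring).
    rewrite <- lsum_mult_l.
    pose proof (IHk _ Hx').
    replace (lam ^ k * (c j x * f (th j x))) with (c j x * (lam ^ k * f (th j x))) by ring.
    now apply Rmult_le_compat_l.
  - pose proof (pow_le _ k Hlam). pose proof (Hf x Hx).
    replace (lam * lam ^ k * f x) with (lam ^ k * (lam * f x)) by ring.
    now apply Rmult_le_compat_l.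
Qed.

Variables (c q : nat -> R -> R) (lam kap : R) (mu : nat) (v w : R -> R).
Hypothesis Hlam : 0 < lam.
Hypothesis Hkap : 0 <= kap < 1.
Hypothesis Hv_pos : forall x, a1 <= x <= a2 -> 0 < v x.
Hypothesis Hc : forall beta x, (beta < N)%nat -> a1 < x < a2 -> 0 <= c beta x.
Hypothesis Hq : forall beta x, (beta < N)%nat -> a1 < x < a2 -> 0 <= q beta x.
Hypothesis Hv_super : forall x, a1 < x < a2 -> transfer N c th v x <= lam * v x.
Hypothesis Hw_super : forall x, a1 < x < a2 ->
  transfer N (fun j y => c j y * q j y) th w x <= lam * w x.
Hypothesis Hq_contr : forall u, In u (words N mu) -> forall x, a1 < x < a2 ->
  weight q th u x <= kap.

(* Compare the [mu]-fold iterates of both inequalities word by word, using [weight q <= kap]. *)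
Lemma lower_bound_contract c0 : c0 <= 0 ->
  (forall y, a1 <= y <= a2 -> c0 * v y <= w y) ->
  forall y, a1 < y < a2 -> kap * c0 * v y <= w y.
Proof.
  intros Hc0 Hwv y Hy.
  apply (Rmult_le_reg_l (lam ^ mu)); [now apply pow_lt |].
  pose proof (transfer_iter_le c lam v ltac:(lra) Hc Hv_super mu y Hy) as Iv.
  pose proof (transfer_iter_le (fun j y => c j y * q j y) lam w ltac:(lra)
    ltac:(intros; apply Rmult_le_pos; auto) Hw_super mu y Hy) as Iw.
  eapply Rle_trans; [| exact Iw].
  apply Rle_trans with
    (kap * c0 * lsum (words N mu) (fun u => weight c th u y * v (theta_comp th u y))).
  - assert (kap * c0 <= 0) by nra. nra.
  - rewrite lsum_mult_l. apply lsum_le. intros u Hu.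
    destruct (in_words _ _ _ Hu) as [_ Hf]. rewrite weight_mul.
    pose proof (theta_comp_interior u y Hf Hy) as Hz.
    pose proof (weight_nonneg c u y Hc Hf Hy) as HA.
    pose proof (weight_nonneg q u y Hq Hf Hy) as HQ.
    pose proof (Hq_contr u Hu y Hy) as HQk.
    pose proof (Hwv (theta_comp th u y) ltac:(lra)) as HW.
    pose proof (Hv_pos (theta_comp th u y) ltac:(lra)) as HV.
    set (A := weight c th u y) in *. set (Q := weight q th u y) in *.
    set (V := v (theta_comp th u y)) in *. set (W := w (theta_comp th u y)) in *.
    assert (0 <= A * Q) by nra.
    assert (A * Q * (c0 * V) <= A * Q * W) by (apply Rmult_le_compat_l; lra).
    assert (0 <= (A * V) * ((kap - Q) * - c0)) by (apply Rmult_le_pos; nra).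
    nra.
Qed.

Lemma minimum_principle :
  (forall x, a1 <= x <= a2 -> continuity_pt v x) ->
  (forall x, a1 <= x <= a2 -> continuity_pt w x) ->
  forall x, a1 <= x <= a2 -> 0 <= w x.
Proof.
  intros Hvc Hwc.
  destruct (continuity_ab_min (fun x => w x / v x) a1 a2) as [x0 [Hmin Hx0]]; [lra | |].
  { intros y Hy. apply continuity_pt_div; auto. specialize (Hv_pos y Hy). lra. }
  set (c0 := w x0 / v x0) in *.
  assert (Hwv : forall y, a1 <= y <= a2 -> c0 * v y <= w y).
  { intros y Hy. specialize (Hmin y Hy). specialize (Hv_pos y Hy).
    replace (w y) with (w y / v y * v y) by (field; lra). apply Rmult_le_compat_r; lra. }
  destruct (Rle_dec 0 c0) as [Hc0 | Hc0].
  { intros x Hx. specialize (Hwv x Hx). specialize (Hv_pos x Hx). nra. }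
  exfalso.
  assert (Hx0' : kap * c0 * v x0 <= w x0).
  { enough (0 <= w x0 - kap * c0 * v x0) by lra.
    apply (closure_ge a1 a2 (fun y => w y - kap * c0 * v y)); auto.
    - apply continuity_pt_minus, continuity_pt_mult; auto.
      apply continuity_pt_const. intros ??; auto.
    - intros y Hy. pose proof (lower_bound_contract c0 ltac:(lra) Hwv y Hy). lra. }
  assert (w x0 = c0 * v x0) by (unfold c0; field; specialize (Hv_pos x0 Hx0); lra).
  specialize (Hv_pos x0 Hx0). clearbody c0.
  assert (0 < (1 - kap) * (- c0)) by (apply Rmult_lt_0_compat; lra). nra.
Qed.

End MinimumPrinciple.

Lemma Cm2_regularity m f : (2 <= m)%nat -> Cm m f -> forall x,
  ex_derive f x /\ ex_derive (Derive f) x /\ continuity_pt f x /\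
  continuity_pt (Derive f) x /\ continuity_pt (Derive_n f 2) x.
Proof.
  intros Hm [Hder Hcont] x.
  assert (E0 : forall y, ex_derive f y) by (intros y; exact (Hder 0%nat y ltac:(lia))).
  assert (E1 : forall y, ex_derive (Derive f) y) by (intros y; exact (Hder 1%nat y ltac:(lia))).
  repeat split; auto; apply continuity_pt_filterlim.
  - apply (ex_derive_continuous f x); auto.
  - apply (ex_derive_continuous (Derive f) x); auto.
  - destruct (Nat.eq_dec m 2) as [-> | Hn]; [apply Hcont |].
    apply (ex_derive_continuous (Derive_n f 2) x). exact (Hder 2%nat x ltac:(lia)).
Qed.

(* The parts of [D (b^s (v o th))] and [D^2 (b^s (v o th))] free of the top-order derivative
   of [v]; the first summand of [source2] is [(b^s)'' (v o th)], with
   [(b^s)'' = s b^(s-2) (b'' b - (1 - s) b'^2)], whence the sign condition. *)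
Definition source1 (b v th : R -> R) (s y : R) : R :=
  Rpower (b y) s * (s * Derive b y / b y) * v (th y).

Definition source2 (b v th : R -> R) (s y : R) : R :=
  Rpower (b y) s * s * (Derive_n b 2 y * b y - (1 - s) * Derive b y ^ 2) / b y ^ 2 * v (th y)
  + 2 * (Rpower (b y) s * (s * Derive b y / b y)) * Derive th y * Derive v (th y)
  + Rpower (b y) s * Derive_n th 2 y * Derive v (th y).

(* [auto_derive] leaves eta-expanded functions, which [field] would treat as new atoms. *)
Ltac eta_reduce :=
  repeat match goal with |- context [fun x0 : R => ?f x0] => change (fun x0 : R => f x0) with f end.

Lemma is_derive_weighted_comp (b v th : R -> R) s x :
  0 < b x -> ex_derive b x -> ex_derive v (th x) -> ex_derive th x ->
  is_derive (fun y => Rpower (b y) s * v (th y)) x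
    (source1 b v th s x + Rpower (b x) s * Derive th x * Derive v (th x)).
Proof.
  intros. unfold source1, Rpower. auto_derive.
  - repeat split; auto; lra.
  - eta_reduce. field. lra.
Qed.

Lemma is_derive_weighted_comp_derive (b v th : R -> R) s x :
  0 < b x -> ex_derive b x -> ex_derive (Derive b) x ->
  ex_derive v (th x) -> ex_derive (Derive v) (th x) -> ex_derive th x -> ex_derive (Derive th) x ->
  is_derive (fun y => source1 b v th s y + Rpower (b y) s * Derive th y * Derive v (th y)) x
    (source2 b v th s x + Rpower (b x) s * Derive th x ^ 2 * Derive_n v 2 (th x)).
Proof.
  intros. unfold source1, source2, Rpower. simpl. auto_derive.
  - repeat split; auto; lra.
  - eta_reduce. field. lra.
Qed.

Lemma Rdiv_nonneg_pos x y : 0 <= x -> 0 < y -> 0 <= x / y.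
Proof. intros. unfold Rdiv. apply Rmult_le_pos; [lra | now apply Rlt_le, Rinv_0_lt_compat]. Qed.

Lemma source1_nonneg (b v th : R -> R) s y : 0 < s -> 0 < b y -> 0 <= Derive b y ->
  0 < v (th y) -> 0 <= source1 b v th s y.
Proof.
  intros Hs Hb Hb' Hv. unfold source1, Rpower. pose proof (exp_pos (s * ln (b y))).
  assert (0 <= s * Derive b y / b y) by (apply Rdiv_nonneg_pos; nra).
  apply Rmult_le_pos; [apply Rmult_le_pos |]; lra.
Qed.

Lemma source1_pos (b v th : R -> R) s y : 0 < s -> 0 < b y -> 0 < Derive b y ->
  0 < v (th y) -> 0 < source1 b v th s y.
Proof.
  intros Hs Hb Hb' Hv. unfold source1, Rpower. pose proof (exp_pos (s * ln (b y))).
  assert (0 < s * Derive b y / b y) by (apply Rdiv_lt_0_compat; nra).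
  apply Rmult_lt_0_compat; [apply Rmult_lt_0_compat |]; lra.
Qed.

Lemma source2_ge_first (b v th : R -> R) s y : 0 < s -> 0 < b y -> 0 <= Derive b y ->
  0 <= Derive th y -> 0 <= Derive_n th 2 y -> 0 <= Derive v (th y) ->
  Rpower (b y) s * s * (Derive_n b 2 y * b y - (1 - s) * Derive b y ^ 2) / b y ^ 2 * v (th y)
  <= source2 b v th s y.
Proof.
  intros Hs Hb Hb' Hth' Hth'' Hdv. unfold source2, Rpower. pose proof (exp_pos (s * ln (b y))).
  assert (0 <= s * Derive b y / b y) by (apply Rdiv_nonneg_pos; nra).
  set (p := exp (s * ln (b y))) in *. set (r := s * Derive b y / b y) in *.
  assert (0 <= p * r) by (apply Rmult_le_pos; lra).
  assert (0 <= 2 * (p * r) * Derive th y * Derive v (th y)) by (apply Rmult_le_pos; [| lra]; nra).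
  assert (0 <= p * Derive_n th 2 y * Derive v (th y)) by (repeat apply Rmult_le_pos; lra).
  lra.
Qed.

Lemma source2_nonneg (b v th : R -> R) s y : 0 < s -> 0 < b y -> 0 <= Derive b y ->
  0 <= Derive th y -> 0 <= Derive_n th 2 y -> 0 < v (th y) -> 0 <= Derive v (th y) ->
  0 <= Derive_n b 2 y * b y - (1 - s) * Derive b y ^ 2 -> 0 <= source2 b v th s y.
Proof.
  intros Hs Hb Hb' Hth' Hth'' Hv Hdv Hconv.
  eapply Rle_trans; [| now apply source2_ge_first]. unfold Rpower.
  pose proof (exp_pos (s * ln (b y))). pose proof (pow_lt _ 2 Hb).
  apply Rmult_le_pos; [apply Rdiv_nonneg_pos |]; try apply Rmult_le_pos; try apply Rmult_le_pos; lra.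
Qed.

Lemma source2_pos (b v th : R -> R) s y : 0 < s -> 0 < b y -> 0 <= Derive b y ->
  0 <= Derive th y -> 0 <= Derive_n th 2 y -> 0 < v (th y) -> 0 <= Derive v (th y) ->
  0 < Derive_n b 2 y * b y - (1 - s) * Derive b y ^ 2 -> 0 < source2 b v th s y.
Proof.
  intros Hs Hb Hb' Hth' Hth'' Hv Hdv Hconv.
  eapply Rlt_le_trans; [| now apply source2_ge_first]. unfold Rpower.
  pose proof (exp_pos (s * ln (b y))). pose proof (pow_lt _ 2 Hb).
  apply Rmult_lt_0_compat; [apply Rdiv_lt_0_compat |]; try apply Rmult_lt_0_compat;
    try apply Rmult_lt_0_compat; lra.
Qed.

Section Eigenfunction.

Variables (a1 a2 : R) (N m : nat) (b theta : nat -> R -> R) (mu : nat) (kappa s lam : R).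
Variable v : R -> R.
Hypothesis Ha : a1 < a2.
Hypothesis HN : (1 <= N)%nat.
Hypothesis Hm : (2 <= m)%nat.
Hypothesis Hb_Cm : forall beta, (beta < N)%nat -> Cm m (b beta).
Hypothesis Htheta_Cm : forall beta, (beta < N)%nat -> Cm m (theta beta).
Hypothesis Hb_pos : forall beta x, (beta < N)%nat -> a1 <= x <= a2 -> 0 < b beta x.
Hypothesis Htheta_H : forall beta x, (beta < N)%nat -> a1 < x < a2 -> a1 < theta beta x < a2.
Hypothesis Hkappa : kappa < 1.
Hypothesis Hcontr : forall w : list nat, length w = mu -> List.Forall (fun j => (j < N)%nat) w ->
  forall x y, a1 <= x <= a2 -> a1 <= y <= a2 ->
  Rabs (theta_comp theta w x - theta_comp theta w y) <= kappa * Rabs (x - y).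
Hypothesis Hd : forall beta u, (beta < N)%nat -> a1 < u < a2 ->
  0 <= Derive (theta beta) u /\ 0 <= Derive_n (theta beta) 2 u /\
  0 <= Derive (b beta) u /\ 0 <= Derive_n (b beta) 2 u /\
  0 <= Derive_n (b beta) 2 u * b beta u - (1 - s) * (Derive (b beta) u) ^ 2.
Hypothesis Hs : 0 < s.
Hypothesis Hv_Cm : Cm m v.
Hypothesis Hv_pos : forall x, a1 <= x <= a2 -> 0 < v x.
Hypothesis Heig : forall x, a1 <= x <= a2 -> Lop N b theta s v x = lam * v x.

Lemma Lop_transfer x :
  Lop N b theta s v x = transfer N (fun beta y => Rpower (b beta y) s) theta v x.
Proof. reflexivity. Qed.

Lemma in_seq_lt beta : In beta (seq 0 N) -> (beta < N)%nat.
Proof. intros H. apply in_seq in H. lia. Qed.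

Lemma theta_closure beta u : (beta < N)%nat -> a1 <= u <= a2 ->
  a1 <= theta beta u <= a2 /\ 0 <= Derive (theta beta) u /\ 0 <= Derive_n (theta beta) 2 u.
Proof.
  intros Hb Hu. destruct (Cm2_regularity m _ Hm (Htheta_Cm beta Hb) u) as [_ [_ [C0 [C1 C2]]]].
  repeat split.
  - apply (closure_ge a1 a2 _ u a1 Ha Hu C0). intros y Hy. pose proof (Htheta_H beta y Hb Hy). lra.
  - apply (closure_le a1 a2 _ u a2 Ha Hu C0). intros y Hy. pose proof (Htheta_H beta y Hb Hy). lra.
  - apply (closure_ge a1 a2 _ u 0 Ha Hu C1). intros y Hy. apply (Hd beta y Hb Hy).
  - apply (closure_ge a1 a2 _ u 0 Ha Hu C2). intros y Hy. apply (Hd beta y Hb Hy).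
Qed.

Lemma eigenvalue_pos : 0 < lam.
Proof.
  set (x := (a1 + a2) / 2). assert (Hx : a1 <= x <= a2) by (unfold x; lra).
  assert (0 < Lop N b theta s v x).
  { apply lsum_pos; [destruct N; [lia | discriminate] |].
    intros beta Hb. apply in_seq_lt in Hb. apply Rmult_lt_0_compat; [apply exp_pos |].
    apply Hv_pos, theta_closure; auto. }
  pose proof (Heig x Hx). pose proof (Hv_pos x Hx). nra.
Qed.

Lemma eigen_derive1 x : a1 <= x <= a2 ->
  lam * Derive v x = lsum (seq 0 N) (fun beta =>
    source1 (b beta) v (theta beta) s x
    + Rpower (b beta x) s * Derive (theta beta) x * Derive v (theta beta x)).
Proof.
  intros Hx. symmetry.
  apply (derive_unique_on_closure a1 a2 (Lop N b theta s v) (fun y => lam * v y) x _ _ Ha Hx Heig).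
  - apply is_derive_Reals.
    apply (is_derive_lsum _ (fun beta y => Rpower (b beta y) s * v (theta beta y))).
    intros beta Hb. apply in_seq_lt in Hb.
    destruct (Cm2_regularity m _ Hm (Hb_Cm beta Hb) x) as [Eb _].
    destruct (Cm2_regularity m _ Hm (Htheta_Cm beta Hb) x) as [Et _].
    destruct (Cm2_regularity m _ Hm Hv_Cm (theta beta x)) as [Ev _].
    apply is_derive_weighted_comp; auto.
  - apply is_derive_Reals. apply is_derive_scal.
    destruct (Cm2_regularity m _ Hm Hv_Cm x) as [Ev _]. now apply Derive_correct.
Qed.

Lemma eigen_derive2 x : a1 <= x <= a2 ->
  lam * Derive_n v 2 x = lsum (seq 0 N) (fun beta =>
    source2 (b beta) v (theta beta) s x
    + Rpower (b beta x) s * Derive (theta beta) x ^ 2 * Derive_n v 2 (theta beta x)).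
Proof.
  intros Hx. symmetry.
  apply (derive_unique_on_closure a1 a2 _ (fun y => lam * Derive v y) x _ _ Ha Hx
    (fun y Hy => eq_sym (eigen_derive1 y Hy))).
  - apply is_derive_Reals.
    apply (is_derive_lsum _ (fun beta y => source1 (b beta) v (theta beta) s y
      + Rpower (b beta y) s * Derive (theta beta) y * Derive v (theta beta y))).
    intros beta Hb. apply in_seq_lt in Hb.
    destruct (Cm2_regularity m _ Hm (Hb_Cm beta Hb) x) as [Eb [Eb' _]].
    destruct (Cm2_regularity m _ Hm (Htheta_Cm beta Hb) x) as [Et [Et' _]].
    destruct (Cm2_regularity m _ Hm Hv_Cm (theta beta x)) as [Ev [Ev' _]].
    apply is_derive_weighted_comp_derive; auto.
  - apply is_derive_Reals. apply is_derive_scal.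
    destruct (Cm2_regularity m _ Hm Hv_Cm x) as [_ [Ev' _]]. now apply Derive_correct.
Qed.

Lemma kappa_nonneg : 0 <= kappa.
Proof.
  assert (Hw : List.Forall (fun j => (j < N)%nat) (repeat 0%nat mu)).
  { apply Forall_forall. intros j Hj. apply repeat_spec in Hj. lia. }
  pose proof (Hcontr _ (repeat_length 0%nat mu) Hw a1 a2 ltac:(lra) ltac:(lra)) as Hlip.
  pose proof (Rabs_pos (theta_comp theta (repeat 0%nat mu) a1
                        - theta_comp theta (repeat 0%nat mu) a2)).
  assert (0 < Rabs (a1 - a2)) by (apply Rabs_pos_lt; lra). nra.
Qed.

Lemma weight_derive_theta_le w x : In w (words N mu) -> a1 < x < a2 ->
  Rabs (weight (fun j => Derive (theta j)) theta w x) <= kappa.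
Proof.
  intros Hw Hx. destruct (in_words _ _ _ Hw) as [Hlen Hf].
  apply (derive_abs_le_of_lipschitz a1 a2 (theta_comp theta w) x _ kappa Ha ltac:(lra)).
  - intros y Hy. apply Hcontr; auto. lra.
  - apply is_derive_Reals, (is_derive_theta_comp N); auto.
    intros beta y Hb. now apply (Cm2_regularity m _ Hm (Htheta_Cm beta Hb)).
Qed.

Lemma eigenfunction_supersolution x : a1 < x < a2 ->
  transfer N (fun beta y => Rpower (b beta y) s) theta v x <= lam * v x.
Proof. intros Hx. rewrite <- Lop_transfer, Heig by lra. lra. Qed.

Lemma derive_nonneg x : a1 <= x <= a2 -> 0 <= Derive v x.
Proof.
  apply (minimum_principle a1 a2 N theta Ha Htheta_H (fun beta y => Rpower (b beta y) s)
    (fun beta => Derive (theta beta)) lam kappa mu v (Derive v)); auto.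
  - exact eigenvalue_pos.
  - pose proof kappa_nonneg. lra.
  - intros. apply Rlt_le, exp_pos.
  - intros. now apply Hd.
  - exact eigenfunction_supersolution.
  - intros y Hy. rewrite eigen_derive1 by lra. apply lsum_le. intros beta Hb.
    apply in_seq_lt in Hb. destruct (Hd beta y Hb Hy) as [_ [_ [Hb' _]]].
    assert (0 <= source1 (b beta) v (theta beta) s y).
    { apply source1_nonneg; auto; [apply Hb_pos | apply Hv_pos, theta_closure]; auto; lra. }
    lra.
  - intros w Hw y Hy. pose proof (weight_derive_theta_le w y Hw Hy).
    pose proof (Rle_abs (weight (fun j => Derive (theta j)) theta w y)). lra.
  - intros y _. now apply (Cm2_regularity m _ Hm Hv_Cm).
  - intros y _. now apply (Cm2_regularity m _ Hm Hv_Cm).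
Qed.

Lemma derive2_nonneg x : a1 <= x <= a2 -> 0 <= Derive_n v 2 x.
Proof.
  apply (minimum_principle a1 a2 N theta Ha Htheta_H (fun beta y => Rpower (b beta y) s)
    (fun beta y => Derive (theta beta) y ^ 2) lam (kappa ^ 2) mu v (Derive_n v 2)); auto.
  - exact eigenvalue_pos.
  - pose proof kappa_nonneg. split; [apply pow_le |]; nra.
  - intros. apply Rlt_le, exp_pos.
  - intros. apply pow2_ge_0.
  - exact eigenfunction_supersolution.
  - intros y Hy. rewrite eigen_derive2 by lra. apply lsum_le. intros beta Hb.
    apply in_seq_lt in Hb. destruct (Hd beta y Hb Hy) as [Ht' [Ht'' [Hb' [_ Hconv]]]].
    assert (Hth : a1 <= theta beta y <= a2) by (apply theta_closure; auto; lra).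
    assert (0 <= source2 (b beta) v (theta beta) s y).
    { apply source2_nonneg; auto; [apply Hb_pos; auto; lra | apply derive_nonneg; auto]. }
    lra.
  - intros w Hw y Hy. rewrite weight_pow2.
    change (weight (fun j => Derive (theta j)) theta w y ^ 2 <= kappa ^ 2).
    rewrite <- pow2_abs. apply pow_incr. split; [apply Rabs_pos | now apply weight_derive_theta_le].
  - intros y _. now apply (Cm2_regularity m _ Hm Hv_Cm).
  - intros y _. now apply (Cm2_regularity m _ Hm Hv_Cm).
Qed.

Section StrictConvexity.

Variable u : R.
Hypothesis Hu : a1 <= u <= a2.
Hypothesis Hstrict : forall beta, (beta < N)%nat ->
  0 < Derive (b beta) u /\
  0 < Derive_n (b beta) 2 u * b beta u - (1 - s) * (Derive (b beta) u) ^ 2.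

Lemma derive_pos : 0 < Derive v u.
Proof.
  pose proof eigenvalue_pos. enough (0 < lam * Derive v u) by nra.
  rewrite eigen_derive1 by auto. apply lsum_pos; [destruct N; [lia | discriminate] |].
  intros beta Hb. apply in_seq_lt in Hb.
  destruct (theta_closure beta u Hb Hu) as [Hth [Ht' _]].
  assert (0 < source1 (b beta) v (theta beta) s u).
  { apply source1_pos; auto. now apply Hstrict. }
  assert (0 <= Rpower (b beta u) s * Derive (theta beta) u * Derive v (theta beta u)).
  { pose proof (exp_pos (s * ln (b beta u))). pose proof (derive_nonneg _ Hth).
    unfold Rpower. apply Rmult_le_pos; [apply Rmult_le_pos |]; lra. }
  lra.
Qed.

Lemma derive2_pos : 0 < Derive_n v 2 u.
Proof.
  pose proof eigenvalue_pos. enough (0 < lam * Derive_n v 2 u) by nra.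
  rewrite eigen_derive2 by auto. apply lsum_pos; [destruct N; [lia | discriminate] |].
  intros beta Hb. apply in_seq_lt in Hb.
  destruct (theta_closure beta u Hb Hu) as [Hth [Ht' Ht'']]. destruct (Hstrict beta Hb) as [Hb' Hconv].
  assert (0 < source2 (b beta) v (theta beta) s u).
  { apply source2_pos; auto; try lra. now apply derive_nonneg. }
  assert (0 <= Rpower (b beta u) s * Derive (theta beta) u ^ 2 * Derive_n v 2 (theta beta u)).
  { pose proof (exp_pos (s * ln (b beta u))). pose proof (derive2_nonneg _ Hth).
    unfold Rpower. apply Rmult_le_pos; [apply Rmult_le_pos |]; try lra. apply pow2_ge_0. }
  lra.
Qed.

End StrictConvexity.

End Eigenfunction.

Theorem theorem6p5
  (a1 a2 : R) (N m : nat) (b theta : nat -> R -> R) (mu : nat) (kappa s : R)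
  (Ha : a1 < a2) (HN : (1 <= N)%nat) (Hm : (2 <= m)%nat)
  (Hb_Cm : forall beta, (beta < N)%nat -> Cm m (b beta))
  (Htheta_Cm : forall beta, (beta < N)%nat -> Cm m (theta beta))
  (Hb_pos : forall beta x, (beta < N)%nat -> a1 <= x <= a2 -> 0 < b beta x)
  (Htheta_H : forall beta x, (beta < N)%nat -> a1 < x < a2 -> a1 < theta beta x < a2)
  (Hmu : (1 <= mu)%nat) (Hkappa : kappa < 1)
  (Hcontr : forall w : list nat, length w = mu -> List.Forall (fun j => (j < N)%nat) w ->
     forall x y, a1 <= x <= a2 -> a1 <= y <= a2 ->
     Rabs (theta_comp theta w x - theta_comp theta w y) <= kappa * Rabs (x - y))
  (Hd : forall beta u, (beta < N)%nat -> a1 < u < a2 ->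
     0 <= Derive (theta beta) u /\ 0 <= Derive_n (theta beta) 2 u /\
     0 <= Derive (b beta) u /\ 0 <= Derive_n (b beta) 2 u /\
     0 <= Derive_n (b beta) 2 u * b beta u - (1 - s) * (Derive (b beta) u) ^ 2)
  (Hs : 0 < s)
  (v : R -> R) (Hv_Cm : Cm m v)
  (Hv_pos : forall x, a1 <= x <= a2 -> 0 < v x)
  (Hv_eig : exists lam : R, forall x, a1 <= x <= a2 -> Lop N b theta s v x = lam * v x) :
  (forall u, a1 <= u <= a2 -> 0 <= Derive v u /\ 0 <= Derive_n v 2 u) /\
  (forall F : R -> Prop,
     (forall u, a1 <= u <= a2 -> ~ F u -> forall beta, (beta < N)%nat ->
        0 < Derive (b beta) u /\
        0 < Derive_n (b beta) 2 u * b beta u - (1 - s) * (Derive (b beta) u) ^ 2) ->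
     forall u, a1 <= u <= a2 -> ~ F u -> 0 < Derive v u /\ 0 < Derive_n v 2 u).
Proof.
  destruct Hv_eig as [lam Heig]. split.
  - intros u Hu. split.
    + now apply (derive_nonneg a1 a2 N m b theta mu kappa s lam v).
    + now apply (derive2_nonneg a1 a2 N m b theta mu kappa s lam v).
  - intros F HF u Hu HFu. split.
    + apply (derive_pos a1 a2 N m b theta mu kappa s lam v); auto.
    + apply (derive2_pos a1 a2 N m b theta mu kappa s lam v); auto.
Qed.
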